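(* Let $(\mathfrak g,B,S,E)$ be a quadratic ENL-RB algebra of weight $\lambda\neq0$. Then $(\mathfrak g,\mathfrak g^*_{r^{B,S}},E)$ is an ENL bialgebra; that is, $(\mathfrak g,\mathfrak g^*_{r^{B,S}})$ is a Lie bialgebra, $E$ is an equivariant Nijenhuis operator on $\mathfrak g$ and $E^*$ is an equivariant Nijenhuis operator on the Lie algebra $\mathfrak g^*_{r^{B,S}}$, i.e. $E^*[\xi,\eta]_{r^{B,S}}=[E^*\xi,\eta]_{r^{B,S}}$ for all $\xi,\eta\in\mathfrak g^*$.
   Context: All vector spaces are finite-dimensional over an algebraically closed field of characteristic zero. A Rota–Baxter operator of weight $\lambda$ on a Lie algebra $\mathfrak g$ is linear $B$ with $[Bx,By]=B([Bx,y]+[x,By]+\lambda[x,y])$. A quadratic Rota–Baxter Lie algebra $(\mathfrak g,B,S)$ of weight $\lambda$ is such a $B$ together with a nondegenerate symmetric invariant ($S([x,y],z)+S(y,[x,z])=0$) bilinear form $S$ with $S(x,By)+S(Bx,y)+\lambda S(x,y)=0$. A quadratic ENL-RB algebra $(\mathfrak g,B,S,E)$ is a quadratic Rota–Baxter Lie algebra $(\mathfrak g,B,S)$ of weight $\lambda\neq0$ with a linear $E:\mathfrak g\to\mathfrak g$ such that $E[x,y]=[x,Ey]$ for all $x,y$, $S(Ex,y)=S(x,Ey)$, and $E\circ B=B\circ E$. Let $\mathcal I_S:\mathfrak g^*\to\mathfrak g$ be defined by $\langle\mathcal I_S^{-1}x,y\rangle=S(x,y)$, and let $r^{B,S}\in\mathfrak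 g\otimes\mathfrak g$ be the tensor with $r_+:=r^{B,S}(\xi,\cdot)=\frac1\lambda(B+\lambda\mathrm{Id})\circ\mathcal I_S(\xi)$; set $r_-:=-r_+^*$. The Lie algebra $\mathfrak g^*_{r^{B,S}}$ is $\mathfrak g^*$ with bracket $[\xi,\eta]_{r^{B,S}}=\mathrm{ad}^*_{r_+\xi}\eta-\mathrm{ad}^*_{r_-\eta}\xi$, where $\langle\mathrm{ad}^*_x\xi,y\rangle=-\langle\xi,[x,y]\rangle$. A Lie bialgebra $(\mathfrak g,\mathfrak g^* )$ means Lie brackets on $\mathfrak g$ and $\mathfrak g^*$ such that the map $\Delta:\mathfrak g\to\mathfrak g\otimes\mathfrak g$ dual to the bracket on $\mathfrak g^*$ is a 1-cocycle: $\Delta([x,y])=(\mathrm{ad}_x\otimes\mathrm{Id}+\mathrm{Id}\otimes\mathrm{ad}_x)\Delta(y)-(\mathrm{ad}_y\otimes\mathrm{Id}+\mathrm{Id}\otimes\mathrm{ad}_y)\Delta(x)$. An ENL bialgebra $(\mathfrak g,\mathfrak g^*,E)$ is a Lie bialgebra such that $E[x,y]=[x,Ey]$ on $\mathfrak g$ and $E^*[\xi,\eta]=[\xi,E^*\eta]$ on $\mathfrak g^*$. *)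

(* A finite-dimensional vector space g over K is modelled in
   coordinates as row vectors 'rV[K]_n; its dual g^* is also 'rV[K]_n with the
   canonical pairing <xi, x> = \sum_i xi_i x_i (delta_mx 0 i is the basis and
   dual basis).  Linear maps g -> g are matrices acting on the right
   (x |-> x *m M); g (x) g is 'M[K]_n (coefficients on e_i (x) e_j). *)
From HB Require Import structures.
From mathcomp Require Import all_boot all_order all_algebra.
Set Implicit Arguments. Unset Strict Implicit. Unset Printing Implicit Defensive.
Import Order.TTheory GRing.Theory Num.Theory.
Local Open Scope ring_scope.

Section Defs.
Variables (K : fieldType) (n : nat).

Definition vec := 'rV[K]_n.
Definition bracket := vec -> vec -> vec.

Definition ev (i : 'I_n) : vec := delta_mx 0 i.

Definition pair (xi x : vec) : K := \sum_i xi 0 i * x 0 i.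

Definition is_lie (br : bracket) : Prop :=
  [/\ (forall (a : K) x y z, br (a *: x + y) z = a *: br x z + br y z),
      (forall (a : K) x y z, br x (a *: y + z) = a *: br x y + br x z),
      (forall x, br x x = 0) &
      (forall x y z, br x (br y z) + br y (br z x) + br z (br x y) = 0)].

Definition dual_map (f : vec -> vec) (xi : vec) : vec :=
  \row_j pair xi (f (ev j)).

Definition coad (br : bracket) (x xi : vec) : vec :=
  \row_j - pair xi (br x (ev j)).

Definition Sform (S : 'M[K]_n) (x y : vec) : K := (x *m S *m y^T) 0 0.

(* I_S : g^* -> g, characterised by <I_S^{-1} x, y> = S(x,y), i.e.
   I_S^{-1} x = x *m S  (S symmetric nondegenerate) *)
Definition IS (S : 'M[K]_n) (xi : vec) : vec := xi *m invmx S.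

Definition rplus (lam : K) (B S : 'M[K]_n) (xi : vec) : vec :=
  lam^-1 *: (IS S xi *m (B + lam%:M)).

Definition rminus (lam : K) (B S : 'M[K]_n) (xi : vec) : vec :=
  - dual_map (rplus lam B S) xi.

Definition rbracket (br : bracket) (lam : K) (B S : 'M[K]_n) : bracket :=
  fun xi eta => coad br (rplus lam B S xi) eta - coad br (rminus lam B S eta) xi.

Definition tens (u v : vec) : 'M[K]_n := u^T *m v.

Definition ad_tens (br : bracket) (x : vec) (T : 'M[K]_n) : 'M[K]_n :=
  \sum_i \sum_j T i j *: (tens (br x (ev i)) (ev j) + tens (ev i) (br x (ev j))).

Definition cobracket (brd : bracket) (x : vec) : 'M[K]_n :=
  \matrix_(i, j) pair (brd (ev i) (ev j)) x.

Definition is_cocycle (br brd : bracket) : Prop :=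
  forall x y, cobracket brd (br x y) =
    ad_tens br x (cobracket brd y) - ad_tens br y (cobracket brd x).

Definition lie_bialgebra (br brd : bracket) : Prop :=
  [/\ is_lie br, is_lie brd & is_cocycle br brd].

Definition ENL_bialgebra (br brd : bracket) (E : 'M[K]_n) : Prop :=
  [/\ lie_bialgebra br brd,
      (forall x y, br x y *m E = br x (y *m E)) &
      (forall xi eta, dual_map (fun x => x *m E) (brd xi eta)
                      = brd xi (dual_map (fun x => x *m E) eta))].

Definition rota_baxter (br : bracket) (lam : K) (B : 'M[K]_n) : Prop :=
  forall x y, br (x *m B) (y *m B)
              = (br (x *m B) y + br x (y *m B) + lam *: br x y) *m B.

Definition quadratic_RB (br : bracket) (lam : K) (B S : 'M[K]_n) : Prop :=
  [/\ is_lie br, rota_baxter br lam B,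
      S \in unitmx /\ S^T = S,
      (forall x y z, Sform S (br x y) z + Sform S y (br x z) = 0) &
      (forall x y, Sform S x (y *m B) + Sform S (x *m B) y + lam * Sform S x y = 0)].

Definition quadratic_ENL_RB (br : bracket) (lam : K) (B S E : 'M[K]_n) : Prop :=
  [/\ quadratic_RB br lam B S, lam != 0,
      (forall x y, br x y *m E = br x (y *m E)),
      (forall x y, Sform S (x *m E) y = Sform S x (y *m E)) &
      B *m E = E *m B].

End Defs.

(* Through I_S, the bracket of g^*_r becomes the rescaled descendent bracket
   lam^-1 ([Bx,y] + [x,By] + lam [x,y]) of the Rota-Baxter operator B: the
   S-invariance of ad identifies ad^* with ad, and the S-adjoint -B - lam of B
   computes r_-.  The descendent bracket is a Lie bracket because B maps it to
   the bracket of g.  The cobracket is Delta(x) = ad_x . r, a coboundary, hence a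
   1-cocycle because g (x) g is a g-module.  Finally E commutes with B, is
   S-self-adjoint and equivariant, so it commutes with the descendent bracket in
   each argument, and E^* is E conjugated by I_S. *)
From HB Require Import structures.
From mathcomp Require Import all_boot all_order all_algebra ring.
Import GRing.Theory.
Local Open Scope ring_scope.
Set Implicit Arguments. Unset Strict Implicit.

Section Coordinates.
Variables (K : fieldType) (n : nat).
Implicit Types (x u v xi : 'rV[K]_n) (M : 'M[K]_n).

Lemma ev_mulmx M i j : (ev K i *m M) 0 j = M i j.
Proof. by rewrite /ev -rowE mxE. Qed.

Lemma mulmx_trev u j : (u *m (ev K j)^T) 0 0 = u 0 j.
Proof. by rewrite /ev trmx_delta -colE !mxE. Qed.

Lemma pairE xi x : pair xi x = (xi *m x^T) 0 0.
Proof. by rewrite /pair !mxE; apply: eq_bigr => i _; rewrite !mxE. Qed.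

Lemma pairB u v x : pair (u - v) x = pair u x - pair v x.
Proof. by rewrite /pair -sumrB; apply: eq_bigr => i _; rewrite !mxE mulrBl. Qed.

Lemma mx_form_eq0 M : (forall u v, (u *m M *m v^T) 0 0 = 0) -> M = 0.
Proof.
move=> M0; apply/matrixP => i j.
by rewrite -[M i j]ev_mulmx -mulmx_trev M0 mxE.
Qed.

Lemma dual_mapE M xi : dual_map (fun x => x *m M) xi = xi *m M^T.
Proof.
apply/rowP => j; rewrite /dual_map mxE pairE -[RHS]mulmx_trev.
by rewrite /ev -rowE tr_row colE mulmxA trmx_delta.
Qed.

Lemma eq_dual_map (f g : 'rV[K]_n -> 'rV[K]_n) xi :
  f =1 g -> dual_map f xi = dual_map g xi.
Proof. by move=> fg; apply/rowP => j; rewrite !mxE fg. Qed.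

End Coordinates.

Lemma eq_is_lie (K : fieldType) n (br br' : bracket K n) :
  (forall x y, br x y = br' x y) -> is_lie br -> is_lie br'.
Proof. by move=> e [Dl Dr A J]; split=> *; rewrite -!e. Qed.

Section LieBracket.
Variables (K : fieldType) (n : nat) (br : bracket K n).
Hypothesis br_lie : is_lie br.
Implicit Types (a : K) (x y z u xi : 'rV[K]_n) (T : 'M[K]_n).

Lemma brDl x y z : br (x + y) z = br x z + br y z.
Proof. by case: br_lie => Dl _ _ _; have := Dl 1 x y z; rewrite !scale1r. Qed.

Lemma brDr x y z : br z (x + y) = br z x + br z y.
Proof. by case: br_lie => _ Dr _ _; have := Dr 1 z x y; rewrite !scale1r. Qed.

Lemma br0l z : br 0 z = 0.
Proof. by apply: (addIr (br 0 z)); rewrite -brDl !add0r. Qed.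

Lemma br0r z : br z 0 = 0.
Proof. by apply: (addIr (br z 0)); rewrite -brDr !add0r. Qed.

Lemma brZl a x z : br (a *: x) z = a *: br x z.
Proof. by case: br_lie => Dl _ _ _; rewrite -[a *: x]addr0 Dl br0l addr0. Qed.

Lemma brZr a x z : br z (a *: x) = a *: br z x.
Proof. by case: br_lie => _ Dr _ _; rewrite -[a *: x]addr0 Dr br0r addr0. Qed.

Lemma brNr x z : br z (- x) = - br z x.
Proof. by rewrite -scaleN1r brZr scaleN1r. Qed.

Lemma brxx x : br x x = 0.
Proof. by case: br_lie. Qed.

Lemma br_anticomm x y : br y x = - br x y.
Proof.
apply/eqP; rewrite -addr_eq0 addrC.
by have := brxx (x + y); rewrite brDl !brDr !brxx add0r addr0 => ->.
Qed.

Lemma br_jacobi x y z : br x (br y z) + br y (br z x) + br z (br x y) = 0.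
Proof. by case: br_lie. Qed.

Lemma br_sumr (I : Type) (r : seq I) (P : pred I) (F : I -> 'rV[K]_n) x :
  br x (\sum_(i <- r | P i) F i) = \sum_(i <- r | P i) br x (F i).
Proof.
apply: (big_rec2 (fun s t => br x s = t)); first exact: br0r.
by move=> i s t _ <-; rewrite brDr.
Qed.

Definition ad_mx x : 'M[K]_n := \matrix_(i, j) br x (ev K i) 0 j.

Lemma br_ad_mx x u : br x u = u *m ad_mx x.
Proof.
rewrite {1}(row_sum_delta u) br_sumr; apply/rowP => j.
by rewrite !mxE summxE; apply: eq_bigr => i _; rewrite brZr !mxE.
Qed.

Lemma ad_mx_br x y : ad_mx (br x y) = ad_mx y *m ad_mx x - ad_mx x *m ad_mx y.
Proof.
apply/matrixP => i j; rewrite [LHS]mxE -[RHS]ev_mulmx mulmxBr !mulmxA -!br_ad_mx.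
congr (_ 0 j); have := br_jacobi x y (ev K i).
rewrite (br_anticomm x (ev K i)) brNr (br_anticomm (br x y)).
by move/eqP; rewrite addr_eq0 opprK => /eqP <-.
Qed.

Lemma coadE x xi : coad br x xi = - (xi *m (ad_mx x)^T).
Proof.
apply/rowP => j; rewrite /coad mxE [RHS]mxE pairE br_ad_mx.
by rewrite /ev -rowE tr_row colE mulmxA -colE mxE.
Qed.

Lemma pair_coad x y j : pair (coad br x (ev K j)) y = br y x 0 j.
Proof.
rewrite pairE coadE mulNmx -mulmxA -trmx_mul -br_ad_mx (br_anticomm x y).
rewrite [RHS]mxE [LHS]mxE.
by rewrite -[ev K j *m _]trmxK trmx_mul trmxK mxE mulmx_trev.
Qed.

Lemma ad_tensE x T : ad_tens br x T = (ad_mx x)^T *m T + T *m ad_mx x.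
Proof.
have adl i j : tens (br x (ev K i)) (ev K j) = (ad_mx x)^T *m delta_mx i j.
  by rewrite /tens br_ad_mx /ev -rowE tr_row colE -mulmxA mul_delta_mx.
have adr i j : tens (ev K i) (br x (ev K j)) = delta_mx i j *m ad_mx x.
  by rewrite /tens br_ad_mx /ev trmx_delta mulmxA mul_delta_mx.
rewrite /ad_tens.
under eq_bigr => i _ do under eq_bigr => j _ do
  rewrite adl adr scalerDr scalemxAr scalemxAl.
under eq_bigr => i _ do rewrite big_split /= -mulmx_sumr -mulmx_suml.
by rewrite big_split /= -mulmx_sumr -mulmx_suml -matrix_sum_delta.
Qed.

Lemma ad_tens_br x y T :
  ad_tens br (br x y) T = ad_tens br x (ad_tens br y T) - ad_tens br y (ad_tens br x T).
Proof.
rewrite !ad_tensE ad_mx_br linearB /= !trmx_mul.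
apply/matrixP => i j.
rewrite !(mulmxDr, mulmxDl, mulmxBr, mulmxBl, mulNmx, mulmxN, mulmxA) !mxE.
ring.
Qed.

End LieBracket.

Section LieConstructions.
Variables (K : fieldType) (n : nat) (br : bracket K n).
Hypothesis br_lie : is_lie br.
Implicit Types (a c : K) (x y z : 'rV[K]_n).

Lemma is_lieZ c : is_lie (fun x y => c *: br x y).
Proof.
split=> [a x y z|a x y z|x|x y z].
- by rewrite (brDl br_lie) (brZl br_lie) scalerDr !scalerA mulrC.
- by rewrite (brDr br_lie) (brZr br_lie) scalerDr !scalerA mulrC.
- by rewrite (brxx br_lie) scaler0.
- by rewrite !(brZr br_lie) -!scalerDr (br_jacobi br_lie) !scaler0.
Qed.

Lemma is_lie_conjmx (P : 'M[K]_n) : P \in unitmx ->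
  is_lie (fun x y => br (x *m invmx P) (y *m invmx P) *m P).
Proof.
move=> Pu; split=> [a x y z|a x y z|x|x y z].
- by rewrite mulmxDl -scalemxAl (brDl br_lie) (brZl br_lie) mulmxDl scalemxAl.
- by rewrite mulmxDl -scalemxAl (brDr br_lie) (brZr br_lie) mulmxDl scalemxAl.
- by rewrite (brxx br_lie) mul0mx.
- by rewrite !(mulmxK Pu) -!mulmxDl (br_jacobi br_lie) mul0mx.
Qed.

Section RotaBaxter.
Variables (lam : K) (B : 'M[K]_n).
Hypothesis RB : rota_baxter br lam B.

Definition rb_bracket : bracket K n :=
  fun x y => br (x *m B) y + br x (y *m B) + lam *: br x y.

Lemma rb_bracket_mulB x y : rb_bracket x y *m B = br (x *m B) (y *m B).
Proof. by rewrite RB. Qed.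

Let jacobiator (b : bracket K n) x y z := b x (b y z) + b y (b z x) + b z (b x y).

Lemma rb_bracket_lie : is_lie rb_bracket.
Proof.
have brE := (brDl br_lie, brDr br_lie, brZl br_lie, brZr br_lie).
split=> [a x y z|a x y z|x|x y z].
- rewrite /rb_bracket mulmxDl -scalemxAl !brE.
  by apply/rowP => j; rewrite !mxE; ring.
- rewrite /rb_bracket mulmxDl -scalemxAl !brE.
  by apply/rowP => j; rewrite !mxE; ring.
- by rewrite /rb_bracket (br_anticomm br_lie x) (brxx br_lie) addNr add0r scaler0.
have unfold_outer u v w : rb_bracket u (rb_bracket v w)
    = br (u *m B) (rb_bracket v w) + br u (br (v *m B) (w *m B))
      + lam *: br u (rb_bracket v w).
  by rewrite {1}/rb_bracket rb_bracket_mulB.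
have J0 u v w : jacobiator br u v w = 0 := br_jacobi br_lie u v w.
(* The nine terms with two B's regroup into three Jacobi identities, the nine
   with one B into three more, and the rest into one. *)
transitivity (jacobiator br (x *m B) (y *m B) z + jacobiator br (y *m B) (z *m B) x
  + jacobiator br (z *m B) (x *m B) y
  + lam *: (jacobiator br (x *m B) y z + jacobiator br x (y *m B) z
            + jacobiator br x y (z *m B))
  + lam ^+ 2 *: jacobiator br x y z).
  rewrite !unfold_outer /rb_bracket /jacobiator !brE.
  by apply/rowP => j; rewrite !mxE; ring.
by rewrite !J0 !(addr0, scaler0).
Qed.

End RotaBaxter.
End LieConstructions.

Section Coboundary.
Variables (K : fieldType) (n : nat) (br : bracket K n) (lam : K) (B S : 'M[K]_n).
Hypothesis br_lie : is_lie br.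
Implicit Types (x xi eta : 'rV[K]_n).

Definition r_mx : 'M[K]_n := lam^-1 *: (invmx S *m (B + lam%:M)).

Lemma rplus_mx xi : rplus lam B S xi = xi *m r_mx.
Proof. by rewrite /rplus /IS /r_mx -scalemxAr mulmxA. Qed.

Lemma rminus_mx eta : rminus lam B S eta = - (eta *m r_mx^T).
Proof. by rewrite /rminus (eq_dual_map _ rplus_mx) dual_mapE. Qed.

Lemma cobracket_rbracket x : cobracket (rbracket br lam B S) x = ad_tens br x r_mx.
Proof.
rewrite (ad_tensE br_lie); apply/matrixP => i j.
rewrite mxE /rbracket pairB !(pair_coad br_lie) rplus_mx rminus_mx (brNr br_lie).
rewrite !(br_ad_mx br_lie) [X in _ - X]mxE opprK -!mulmxA !ev_mulmx.
rewrite [RHS]mxE [RHS]addrC.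
by rewrite -[(ad_mx br x)^T *m r_mx]trmxK trmx_mul trmxK [X in _ = _ + X]mxE.
Qed.

Lemma rbracket_cocycle : is_cocycle br (rbracket br lam B S).
Proof. by move=> x y; rewrite !cobracket_rbracket (ad_tens_br br_lie). Qed.

End Coboundary.

Section Equivariance.
Variables (K : fieldType) (n : nat) (br : bracket K n) (lam : K) (B E : 'M[K]_n).
Hypothesis br_lie : is_lie br.
Hypothesis E_equivariant : forall x y, br x y *m E = br x (y *m E).
Hypothesis BE : B *m E = E *m B.
Implicit Types (x y : 'rV[K]_n).

Lemma br_mulEl x y : br (x *m E) y = br x y *m E.
Proof.
by rewrite (br_anticomm br_lie y) -E_equivariant (br_anticomm br_lie x) mulNmx opprK.
Qed.

Lemma rb_bracket_mulEl x y :
  rb_bracket br lam B (x *m E) y = rb_bracket br lam B x y *m E.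
Proof. by rewrite /rb_bracket !mulmxDl -scalemxAl -!br_mulEl -mulmxA -BE mulmxA. Qed.

Lemma rb_bracket_mulEr x y :
  rb_bracket br lam B x (y *m E) = rb_bracket br lam B x y *m E.
Proof. by rewrite /rb_bracket !mulmxDl -scalemxAl !E_equivariant -mulmxA -BE mulmxA. Qed.

End Equivariance.

Section Quadratic.
Variables (K : fieldType) (n : nat) (br : bracket K n) (lam : K) (B S : 'M[K]_n).
Hypothesis br_lie : is_lie br.
Hypothesis S_unit : S \in unitmx.
Hypothesis S_sym : S^T = S.
Hypothesis S_invariant : forall x y z, Sform S (br x y) z + Sform S y (br x z) = 0.
Hypothesis S_B :
  forall x y, Sform S x (y *m B) + Sform S (x *m B) y + lam * Sform S x y = 0.
Implicit Types (x y xi eta : 'rV[K]_n).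

Lemma ad_mx_S_skew x : ad_mx br x *m S + S *m (ad_mx br x)^T = 0.
Proof.
apply: mx_form_eq0 => u v; rewrite mulmxDr mulmxDl !mulmxA -!(br_ad_mx br_lie).
rewrite -[u *m S *m _ *m v^T]mulmxA -trmx_mul -(br_ad_mx br_lie) mxE.
exact: S_invariant.
Qed.

Lemma coad_IS x xi : coad br x xi = br x (IS S xi) *m S.
Proof.
rewrite (coadE br_lie) (br_ad_mx br_lie) /IS -!mulmxA -mulmxN; congr (xi *m _).
apply: (canRL (mulKmx S_unit)); rewrite mulmxN.
by apply/eqP; rewrite eq_sym -addr_eq0 ad_mx_S_skew.
Qed.

Lemma B_S_adjoint : S *m B^T + B *m S + lam *: S = 0.
Proof.
apply: mx_form_eq0 => u v; rewrite !mulmxDr !mulmxDl -scalemxAr -scalemxAl !mulmxA.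
rewrite -[u *m S *m B^T *m v^T]mulmxA -trmx_mul.
by have := S_B u v; rewrite /Sform !mxE.
Qed.

Lemma rplusE xi : rplus lam B S xi = lam^-1 *: (IS S xi *m B + lam *: IS S xi).
Proof. by rewrite /rplus mulmxDr mul_mx_scalar. Qed.

Lemma rminusE eta : rminus lam B S eta = lam^-1 *: (IS S eta *m B).
Proof.
have BtS : (B^T + lam%:M) *m invmx S = - (invmx S *m B).
  have SBt : S *m B^T + lam *: S = - (B *m S).
    by apply/eqP; rewrite -addr_eq0 addrAC B_S_adjoint.
  apply: (can_inj (mulKmx S_unit)); rewrite mulmxA mulmxDr mul_mx_scalar SBt.
  by rewrite mulNmx (mulmxK S_unit) mulmxN (mulKVmx S_unit).
rewrite rminus_mx /r_mx linearZ /= trmx_mul trmx_inv S_sym linearD /= tr_scalar_mx.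
by rewrite -scalemxAr BtS mulmxN scalerN opprK /IS mulmxA.
Qed.

Lemma rbracketE xi eta :
  rbracket br lam B S xi eta = (lam^-1 *: rb_bracket br lam B (IS S xi) (IS S eta)) *m S.
Proof.
rewrite /rbracket rplusE rminusE !coad_IS -mulmxBl; congr (_ *m S).
rewrite /rb_bracket !(brZl br_lie, brDl br_lie).
rewrite (br_anticomm br_lie (IS S xi) (IS S eta *m B)).
by apply/rowP => j; rewrite !mxE; ring.
Qed.

Lemma rbracket_lie : rota_baxter br lam B -> is_lie (rbracket br lam B S).
Proof.
move=> RB; apply: (eq_is_lie (fun xi eta => esym (rbracketE xi eta))).
exact: (is_lie_conjmx (is_lieZ (rb_bracket_lie br_lie RB) _) S_unit).
Qed.

Variable E : 'M[K]_n.
Hypothesis E_equivariant : forall x y, br x y *m E = br x (y *m E).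
Hypothesis S_E : forall x y, Sform S (x *m E) y = Sform S x (y *m E).
Hypothesis BE : B *m E = E *m B.

Lemma E_S_adjoint : E *m S = S *m E^T.
Proof.
apply/eqP; rewrite -subr_eq0; apply/eqP; apply: mx_form_eq0 => u v.
rewrite mulmxBr mulmxBl !mulmxA -[u *m S *m E^T *m v^T]mulmxA -trmx_mul mxE.
by have := S_E u v; rewrite /Sform => ->; rewrite [X in _ + X]mxE addrN.
Qed.

Lemma IS_dualE xi : IS S (dual_map (fun x => x *m E) xi) = IS S xi *m E.
Proof.
rewrite dual_mapE /IS -!mulmxA; congr (xi *m _).
apply: (canRL (mulKmx S_unit)); rewrite !mulmxA -E_S_adjoint.
by rewrite (mulmxK S_unit).
Qed.

Lemma rbracket_dualEr xi eta :
  dual_map (fun x => x *m E) (rbracket br lam B S xi eta)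
  = rbracket br lam B S xi (dual_map (fun x => x *m E) eta).
Proof.
rewrite !rbracketE dual_mapE IS_dualE rb_bracket_mulEr //.
by rewrite -!scalemxAl -!mulmxA E_S_adjoint.
Qed.

Lemma rbracket_dualEl xi eta :
  dual_map (fun x => x *m E) (rbracket br lam B S xi eta)
  = rbracket br lam B S (dual_map (fun x => x *m E) xi) eta.
Proof.
rewrite !rbracketE dual_mapE IS_dualE rb_bracket_mulEl //.
by rewrite -!scalemxAl -!mulmxA E_S_adjoint.
Qed.

End Quadratic.

Theorem theorem4p3 (K : closedFieldType) (n : nat)
  (br : bracket K n) (lam : K) (B S E : 'M[K]_n) :
  [pchar K] =i pred0 ->
  quadratic_ENL_RB br lam B S E ->
  ENL_bialgebra br (rbracket br lam B S) E /\
  (forall xi eta,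
     dual_map (fun x => x *m E) (rbracket br lam B S xi eta)
     = rbracket br lam B S (dual_map (fun x => x *m E) xi) eta).
Proof.
move=> _ [[br_lie RB [S_unit S_sym] S_inv S_B] _ E_equiv S_E BE].
split; [split; [split|..]|] => //.
- exact: rbracket_lie.
- exact: rbracket_cocycle.
- exact: rbracket_dualEr.
- exact: rbracket_dualEl.
Qed.
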